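(* Let $q$ be a power of an odd prime and fix a partition $\mathbb{F}_q^*=\mathbb{F}_q^+\sqcup\mathbb{F}_q^-$ such that $a\in\mathbb{F}_q^+$ if and only if $-a\in\mathbb{F}_q^-$. (i) Let $\theta\in\mathbb{F}_{q^2}\setminus\mathbb{F}_q$, so that $\mathbb{F}_{q^2}=\{a\theta+b:a,b\in\mathbb{F}_q\}$. Then both $\{(x,y\theta+z):x,z\in\mathbb{F}_q,\ y\in\mathbb{F}_q^+\}$ and $\{(x,y\theta+z):x,z\in\mathbb{F}_q,\ y\in\mathbb{F}_q^-\}$ are independent sets in $G_{q^2}$. (ii) Let $t\ge3$ be odd and let $\theta\in\mathbb{F}_{q^t}$ be such that $1,\theta,\dots,\theta^{t-1}$ is a basis of $\mathbb{F}_{q^t}$ over $\mathbb{F}_q$. Then both \[ \Big\{\Big(\sum_{i=0}^{(t-3)/2}x_i\theta^i,\ \sum_{j=0}^{t-1}y_j\theta^j\Big):x_i,y_j\in\mathbb{F}_q,\ y_{t-1}\in\mathbb{F}_q^+\Big\} \] and the analogous set with $y_{t-1}\in\mathbb{F}_q^-$ are independent sets in $G_{q^t}$.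
   Context: For a power $Q$ of an odd prime, the graph $G_Q$ has vertex set $\mathbb{F}_Q\times\mathbb{F}_Q$, and distinct vertices $(x_1,x_2)$, $(y_1,y_2)$ are adjacent if and only if $(x_1+y_1)^2=x_2+y_2$ (i.e. their sum lies in $\{(a,a^2):a\in\mathbb{F}_Q\}$); $G_Q$ has no loops. *)

From HB Require Import structures.
From mathcomp Require Import all_boot all_order all_algebra all_field.
Set Implicit Arguments. Unset Strict Implicit. Unset Printing Implicit Defensive.
Import GRing.Theory.
Local Open Scope ring_scope.

Definition GQadj (L : fieldType) : rel (L * L) :=
  fun u v => (u != v) && ((u.1 + v.1) ^+ 2 == u.2 + v.2).

Definition independent_set (L : fieldType) (S : L * L -> Prop) : Prop :=
  forall u v, S u -> S v -> ~~ GQadj u v.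

Definition sign_partition (F : finFieldType) (P M : {set F}) : Prop :=
  [/\ P :&: M = set0, P :|: M = [set a | a != 0] & forall a, (a \in P) = (- a \in M)].

From HB Require Import structures.
From mathcomp Require Import all_boot all_order all_algebra all_field.
From mathcomp Require Import ring zify.
Import GRing.Theory.
Local Open Scope ring_scope.

(* Two vertices of either family are adjacent only if the square of an element
   of a small subspace hits an element whose component along a fixed direction
   is y + y', which is never 0 because y and y' lie in the same half of the
   sign partition. In (i) the small subspace is F and the direction is theta;
   in (ii) it is the span of 1, ..., theta^((t-3)/2), whose squares have
   degree at most t - 3 < t - 1, and the direction is theta^(t-1). *)

Lemma sign_partition_sym {F : finFieldType} {P M : {set F}} :
  sign_partition P M -> sign_partition M P.
Proof.
case=> disjPM covPM oppPM; split; rewrite 1?setIC 1?setUC //.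
by move=> a; rewrite oppPM opprK.
Qed.

Lemma sign_partition_addr_neq0 {F : finFieldType} {P M : {set F}} :
  sign_partition P M -> {in P &, forall y y', y + y' != 0}.
Proof.
case=> disjPM _ oppPM y y' Py Py'; apply/negP; rewrite addr_eq0 => /eqP yE.
have : y \in P :&: M by rewrite inE Py yE -oppPM.
by rewrite disjPM inE.
Qed.

Lemma independent_set_line (F : fieldType) (L : fieldExtType F) (theta : L)
    (S : {pred F}) :
  {in S &, forall y y', y + y' != 0} -> theta \notin 1%VS ->
  independent_set (fun v : L * L => exists x z y : F, y \in S /\
                     v = (x%:A, y *: theta + z%:A)).
Proof.
move=> sumS theta_irr _ _ [x [z [y [Sy ->]]]] [x' [z' [y' [Sy' ->]]]].
rewrite /GQadj negb_and /=; apply/orP; right; apply/eqP => adj.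
have lineE : (y + y') *: theta = ((x + x') ^+ 2 - (z + z'))%:A.
  have sqrE : ((x + x') ^+ 2)%:A = (x%:A + x'%:A) ^+ 2 :> L.
    by rewrite -scalerDl -!in_algE rmorphXn.
  by rewrite scalerBl sqrE adj !scalerDl; ring.
have : (y + y') *: theta \in 1%VS by rewrite lineE memvZ ?mem1v.
by rewrite rpredZeq (negbTE (sumS _ _ Sy Sy')) (negbTE theta_irr).
Qed.

Section LeadingCoordinate.

Variables (F : fieldType) (L : fieldExtType F) (theta : L) (t : nat).
Hypothesis t_gt0 : (0 < t)%N.
Hypothesis free_powers : free [seq theta ^+ i | i <- iota 0 t].

Local Notation powers := (in_tuple [seq theta ^+ i | i <- iota 0 t]).

Let size_powers : size powers = t.
Proof. by rewrite size_map size_iota. Qed.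

Let top_lt : (t.-1 < size powers)%N.
Proof. by rewrite size_powers; lia. Qed.

Local Notation lead_coord := (coord powers (Ordinal top_lt)).

Lemma lead_coord_exp n : (n < t)%N -> lead_coord (theta ^+ n) = (n == t.-1)%:R.
Proof.
move=> lt_nt; have lt_n : (n < size powers)%N by rewrite size_powers.
have -> : theta ^+ n = powers`_(Ordinal lt_n).
  by rewrite /= (nth_map 0%N) ?size_iota // nth_iota.
by rewrite coord_free.
Qed.

Lemma lead_coord_sum (w : nat -> F) :
  lead_coord (\sum_(j < t) w j *: theta ^+ j) = w t.-1.
Proof.
have lt_top : (t.-1 < t)%N by lia.
rewrite linear_sum (bigD1 (Ordinal lt_top)) //= big1 => [|j /negbTE neq_j].
  by rewrite linearZ /= lead_coord_exp // eqxx mulr1 addr0.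
by rewrite linearZ /= lead_coord_exp // -val_eqE /= in neq_j *; rewrite neq_j mulr0.
Qed.

Lemma lead_coord_sqr_low k (a : nat -> F) : (k.*2 <= t)%N ->
  lead_coord ((\sum_(i < k) a i *: theta ^+ i) ^+ 2) = 0.
Proof.
rewrite -addnn => le_kt; rewrite expr2 mulr_suml linear_sum big1 // => -[i lt_i] _.
rewrite mulr_sumr linear_sum big1 // => -[j lt_j] _ /=.
rewrite -scalerAl -scalerAr scalerA -exprD linearZ /= lead_coord_exp; last lia.
have /negbTE -> : (i + j != t.-1)%N by lia.
by rewrite mulr0.
Qed.

Lemma independent_set_lead_coord (S : {pred F}) :
  {in S &, forall y y', y + y' != 0} ->
  independent_set (fun v : L * L => exists x y : nat -> F, y t.-1 \in S /\
      v = (\sum_(i < t.-1./2) x i *: theta ^+ i,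
           \sum_(j < t) y j *: theta ^+ j)).
Proof.
move=> sumS _ _ [x [y [Sy ->]]] [x' [y' [Sy' ->]]].
rewrite /GQadj negb_and /=; apply/orP; right; apply/eqP => adj.
have le_half : (t.-1./2.*2 <= t)%N.
  by rewrite halfK (leq_trans (leq_subr _ _)) ?leq_pred.
have := congr1 lead_coord adj; rewrite linearD /= !lead_coord_sum.
rewrite -big_split /=; under eq_bigr => i _ do rewrite -scalerDl.
rewrite (lead_coord_sqr_low _ (fun i => x i + x' i)) // => /esym /eqP.
by rewrite (negbTE (sumS _ _ Sy Sy')).
Qed.

End LeadingCoordinate.

Theorem lemma3p1 (F : finFieldType) (hodd : odd #|F|) (P M : {set F})
    (hPM : sign_partition P M) :
  (forall (L : fieldExtType F) (theta : L),
     \dim {:L} = 2%N -> theta \notin 1%VS ->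
     independent_set (fun v : L * L => exists x z y : F, y \in P /\
                        v = (x%:A, y *: theta + z%:A)) /\
     independent_set (fun v : L * L => exists x z y : F, y \in M /\
                        v = (x%:A, y *: theta + z%:A)))
  /\
  (forall (t : nat) (L : fieldExtType F) (theta : L),
     odd t -> (3 <= t)%N -> \dim {:L} = t ->
     basis_of fullv [seq theta ^+ i | i <- iota 0 t] ->
     independent_set (fun v : L * L => exists x y : nat -> F, y t.-1 \in P /\
         v = (\sum_(i < t.-1./2) x i *: theta ^+ i,
              \sum_(j < t) y j *: theta ^+ j)) /\
     independent_set (fun v : L * L => exists x y : nat -> F, y t.-1 \in M /\
         v = (\sum_(i < t.-1./2) x i *: theta ^+ i,
              \sum_(j < t) y j *: theta ^+ j))).
Proof.
have sumP := sign_partition_addr_neq0 hPM.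
have sumM := sign_partition_addr_neq0 (sign_partition_sym hPM).
split=> [L theta _ theta_irr | t L theta _ t_ge3 _ /basis_free free_pows].
  by split; apply: independent_set_line.
have t_gt0 : (0 < t)%N by lia.
by split; apply: independent_set_lead_coord.
Qed.
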